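(* Let $X$ be a compact Hausdorff space, $A=C(X)$, and $H_A=l_2(A)$. Let $F\in H''_A$ and let $(F_1,F_2,\dots)\in H'_A$ be the sequence representing $F$, i.e. $F_i=F(\hat e_i)^*$. Let $\Phi:X\to[0,\infty)$ be the point-wise limit $\Phi(x)=\sum_{i=1}^\infty \overline{F_i(x)}F_i(x)$, and let $E\subseteq X$ be the set of points at which $\Phi$ is continuous. Then for every $x_0\in E$ and every $f=(f_1,f_2,\dots)\in H'_A$, the series $\sum_{i=1}^\infty \overline{F_i(x_0)}f_i(x_0)$ converges and its sum equals $F(f)(x_0)$, the value at $x_0$ of the continuous function $F(f)\in C(X)$.
   Context: $H_A=l_2(A)$ is the set of sequences $(a_1,a_2,\dots)$ in $A$ with $\sum_i a_i^*a_i$ norm convergent; it is a right Hilbert $A$-module with componentwise action and inner product $\langle a,b\rangle=\sum_i a_i^*b_i$. Its standard basis vectors are $e_i$ ($1$ in place $i$, $0$ elsewhere). The dual $H'_A$ is the set of bounded $A$-linear maps $H_A\to A$; for $A=C(X)$ it is identified (via $f\mapsto (f(e_i)^* )_i$, so that $f(x)=\sum_i f_i^*x_i$) with the set of sequences $(f_1,f_2,\dots)$, $f_i\in C(X)$, with $\sup_N\|\sum_{i=1}^N \overline{f_i}f_i\|<\infty$ (sup norm), the norm being $\|f\|^2=\sup_N\|\sum_{i=1}^N\overline{f_i}f_i\|$, and the right $A$-module structure being componentwise multiplication. The second dual $H''_A$ is the set of bounded $A$-linear maps $H'_A\to A$. For $i\ge1$, $\hat e_i\in H'_A$ denotes the sequence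 with $1$ in place $i$ and $0$ elsewhere (the image of $e_i$ under $m\mapsto\hat m$, $\hat m(x)=\langle m,x\rangle$). Each $F\in H''_A$ is represented by the sequence $(F_i)$, $F_i=F(\hat e_i)^*$; this is the canonical isometric embedding $H''_A\subseteq H'_A$. *)

From HB Require Import structures.
From mathcomp Require Import all_boot all_order all_algebra.
From mathcomp Require Import all_classical all_reals all_analysis.
From mathcomp Require Import complex.
Set Implicit Arguments. Unset Strict Implicit. Unset Printing Implicit Defensive.
Import Order.TTheory GRing.Theory Num.Theory.
Import numFieldNormedType.Exports.
Local Open Scope classical_set_scope.
Local Open Scope ring_scope.
Local Open Scope complex_scope.

HB.instance Definition _ (R : realType) := PseudoPointedMetric.copy R[i] (R[i])^o.
HB.instance Definition _ (R : realType) := GRing.ComAlgebra.copy R[i] (R[i])^o.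
HB.instance Definition _ (R : realType) := NormedModule.copy R[i] (R[i])^o.

Definition inCX (R : realType) (X : topologicalType) (a : X -> R[i]) : Prop :=
  continuous a.

Definition sqsum (R : realType) (X : Type) (f : nat -> X -> R[i]) (N : nat) (x : X)
  : R[i] := \sum_(i < N) ((f i x)^* * f i x).

Definition normsq_le (R : realType) (X : Type) (f : nat -> X -> R[i]) (M : R) : Prop :=
  forall (N : nat) (x : X), `|sqsum f N x| <= M%:C.

Definition in_dual (R : realType) (X : topologicalType) (f : nat -> X -> R[i]) : Prop :=
  (forall i, inCX (f i)) /\ exists M : R, normsq_le f M.

Definition dscale (R : realType) (X : Type) (f : nat -> X -> R[i]) (a : X -> R[i])
  : nat -> X -> R[i] := fun i x => f i x * a x.
Definition dadd (R : realType) (X : Type) (f g : nat -> X -> R[i])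
  : nat -> X -> R[i] := fun i x => f i x + g i x.

Definition in_bidual (R : realType) (X : topologicalType)
  (F : (nat -> X -> R[i]) -> X -> R[i]) : Prop :=
  [/\ (forall f, in_dual f -> inCX (F f)),
      (forall f g, in_dual f -> in_dual g -> F (dadd f g) = (fun x => F f x + F g x)),
      (forall f a, in_dual f -> inCX a -> F (dscale f a) = (fun x => F f x * a x)) &
      (exists K : R, 0 <= K /\ forall f M, in_dual f -> 0 <= M -> normsq_le f M ->
          forall x, `|F f x| ^+ 2 <= (K ^+ 2 * M)%:C)].

Definition hat_e (R : realType) (X : Type) (i : nat) : nat -> X -> R[i] :=
  fun j _ => if j == i then 1 else 0.

Definition repr_seq (R : realType) (X : Type) (F : (nat -> X -> R[i]) -> X -> R[i])
  : nat -> X -> R[i] := fun i x => (F (@hat_e R X i) x)^*.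

Definition Phi (R : realType) (X : Type) (F : (nat -> X -> R[i]) -> X -> R[i])
  (x : X) : R[i] :=
  limn (fun N => sqsum (repr_seq F) N x).

From Pilot Require Import Defs.
From HB Require Import structures.
From mathcomp Require Import all_boot all_order all_algebra.
From mathcomp Require Import all_classical all_reals all_analysis.
From mathcomp Require Import complex.
From mathcomp.algebra_tactics Require Import ring lra.
Import Order.TTheory GRing.Theory Num.Theory.
Import numFieldNormedType.Exports.
Local Open Scope classical_set_scope.
Local Open Scope ring_scope.
Local Open Scope complex_scope.

(* Write [S_N(x) = sum_(i < N) |F_i(x)|^2].  Multiplying by an Urysohn bump at a
   point and using the A-linearity of [F] localises the bound [|F g|^2 <= K^2 ||g||^2]:
   if [g] has small squared norm near [y], then [F g y] is small.  Applied to the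
   first [N] terms of [(F_i)] this gives [S_N <= K^2 + 1], so [Phi] is the supremum
   of the [S_N].  Given [f] and [x0], continuity of [Phi] at [x0] makes the blocks
   [sum_(M <= i < N) |F_i|^2] uniformly small near [x0], which controls the blocks
   [sum_(M <= i < N) conj(F_i) f_i] there by Cauchy-Schwarz.  Near [x0] pick a point
   [y] at which the partial sums of [|f_i|^2] almost attain their supremum over a
   neighbourhood: the tail of [f] is then small near [y], so [F] of that tail is small
   at [y].  Finally [F f] and the head [sum_(i < M) conj(F_i) f_i] are continuous, which
   transports the decomposition of [F f y] back to [x0]. *)

Section complex_norm.
Context {R : realType}.
Local Notation normc := (@Normc.normc R).
Implicit Types z : R[i].

Lemma normc_ge0 z : 0 <= normc z.
Proof. by rewrite -ler0c; exact: (normr_ge0 z). Qed.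

Lemma normc_real (r : R) : normc r%:C = `|r|.
Proof. by rewrite /Normc.normc /= expr0n /= addr0 sqrtr_sqr. Qed.

Lemma normc_conj z : normc z^* = normc z.
Proof. by have [] := normcJ z. Qed.

Lemma mulJc z : z^* * z = (normc z ^+ 2)%:C.
Proof. by rewrite rmorphXn /= -[(normc z)%:C]/(`|z|) sqr_normc mulrC. Qed.

Lemma normc_sum (I : Type) (s : seq I) (c : I -> R[i]) :
  normc (\sum_(i <- s) c i) <= \sum_(i <- s) normc (c i).
Proof.
elim: s => [|a s IH]; first by rewrite !big_nil Normc.normc0.
by rewrite !big_cons (le_trans (le_normcD _ _)) ?lerD.
Qed.

Lemma continuous_conjc : continuous (@conjc R).
Proof.
move=> z; apply/(@cvgrPdist_lt _ _ _ _ (nbhs_filter z)) => e e0.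
apply: filterS (nbhsx_ballx z e e0) => w /=.
by rewrite -rmorphB /= normcJ.
Qed.

Lemma continuous_real_complex : continuous (real_complex R).
Proof.
move=> r; apply/(@cvgrPdist_lt _ _ _ _ (nbhs_filter r)) => -[a b].
rewrite ltcE /= => /andP[/eqP -> a0].
apply: filterS (nbhsx_ballx r a a0) => s /=.
by rewrite -rmorphB /= -[`|_|]/((normc _)%:C) normc_real ltcR.
Qed.

Section complex_limits.
Context {T : Type} {F : set_system T} {FF : Filter F}.

Lemma cvg_real_complex (g : T -> R) (l : R) :
  (fun t => (g t)%:C) @ F --> l%:C -> g @ F --> l.
Proof.
move=> /(@cvgrPdist_lt _ _ _ _ FF) gl; apply/cvgrPdist_lt => e e0.
have := gl e%:C; rewrite ltcR => /(_ e0); apply: filterS => t.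
by rewrite -rmorphB /= -[`|_|]/((normc _)%:C) normc_real ltcR.
Qed.

Lemma cvg_normc_lt (g : T -> R[i]) l e :
  g @ F --> l -> 0 < e -> \forall t \near F, normc (l - g t) < e.
Proof.
move=> /(@cvgrPdist_lt _ _ _ _ FF) gl e0.
have := gl e%:C; rewrite ltcR => /(_ e0); apply: filterS => t.
by rewrite -[`|_|]/((normc _)%:C) ltcR.
Qed.

Lemma cvg_normc_le (g : T -> R[i]) l :
  (forall e, 0 < e -> \forall t \near F, normc (l - g t) <= e) -> g @ F --> l.
Proof.
move=> gl; apply/(@cvgrPdist_le _ _ _ _ FF) => -[e b].
rewrite ltcE /= => /andP[/eqP -> e0].
by apply: filterS (gl e e0) => t; rewrite -[`|_|]/((normc _)%:C) lecR.
Qed.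

End complex_limits.

Lemma continuous_normc : continuous normc.
Proof.
by move=> z; apply: cvg_real_complex (@norm_continuous _ R[i]^o z).
Qed.

End complex_norm.

Section cauchy_schwarz.
Context {R : realType}.
Local Notation normc := (@Normc.normc R).

Lemma normc_sum_mul_le (I : Type) (s : seq I) (a b : I -> R[i]) (t : R) :
  0 < t -> normc (\sum_(i <- s) a i * b i) <=
  (t * \sum_(i <- s) normc (a i) ^+ 2 + (\sum_(i <- s) normc (b i) ^+ 2) / t) / 2.
Proof.
move=> t0; apply: le_trans (normc_sum _ _ _) _.
rewrite mulr_sumr mulr_suml -big_split mulr_suml /=.
apply: ler_sum => i _; rewrite Normc.normcM.
set x := normc (a i); set y := normc (b i).
have ty : t * (y ^+ 2 / t) = y ^+ 2 by rewrite mulrC divfK // gt_eqF.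
have := sqr_ge0 (t * x - y); nra.
Qed.

(* Taking [t = (B + 1) / e] in the previous bound. *)
Lemma normc_sum_mul_small (I : Type) (s : seq I) (a b : I -> R[i]) (B e : R) :
  0 < e -> 0 <= B -> \sum_(i <- s) normc (a i) ^+ 2 <= e ^+ 2 / (B + 1) ->
  \sum_(i <- s) normc (b i) ^+ 2 <= B -> normc (\sum_(i <- s) a i * b i) <= e.
Proof.
move=> e0 B0 sa sb; have B1 : 0 < B + 1 by rewrite ltr_wpDl.
have t0 : 0 < (B + 1) / e by rewrite divr_gt0.
apply: le_trans (normc_sum_mul_le _ s a b _ t0) _.
have ha : (B + 1) / e * \sum_(i <- s) normc (a i) ^+ 2 <= e.
  apply: le_trans (ler_wpM2l (ltW t0) sa) _.
  by rewrite le_eqVlt; apply/orP; left; apply/eqP; field; rewrite ?gt_eqF.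
have hb : (\sum_(i <- s) normc (b i) ^+ 2) / ((B + 1) / e) <= e.
  rewrite invf_div mulrA ler_pdivrMr // mulrC ler_pM2l //.
  by apply: le_trans sb _; rewrite lerDl.
lra.
Qed.

End cauchy_schwarz.

Lemma sum_ord_split (V : nmodType) (c : nat -> V) M N : (M <= N)%N ->
  \sum_(i < N) c i = \sum_(i < M) c i + \sum_(M <= i < N) c i.
Proof. by move=> MN; rewrite -!(big_mkord xpredT c) -big_cat_nat. Qed.

Definition vmask {R : realType} {X : Type} (P : pred nat) (f : nat -> X -> R[i]) :
  nat -> X -> R[i] := fun i x => if P i then f i x else 0.

Notation vhead N f := (vmask (fun i => (i < N)%N) f).
Notation vtail N f := (vmask (fun i => (N <= i)%N) f).

Section partial_sums.
Context {R : realType} {X : Type}.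
Local Notation normc := (@Normc.normc R).
Implicit Types (f : nat -> X -> R[i]) (x : X).

Definition normsq f N x : R := \sum_(i < N) normc (f i x) ^+ 2.

Lemma sqsumE f N x : sqsum f N x = (normsq f N x)%:C.
Proof. by rewrite /sqsum /normsq rmorph_sum; apply: eq_bigr => i _; exact: mulJc. Qed.

Lemma normsq_ge0 f N x : 0 <= normsq f N x.
Proof. by apply: sumr_ge0 => i _; rewrite exprn_ge0 ?normc_ge0. Qed.

Lemma normsq_leE f M : normsq_le f M <-> forall N x, normsq f N x <= M.
Proof.
by split => fM N x; have := fM N x;
  rewrite sqsumE -[`|_|]/((normc _)%:C) normc_real ger0_norm ?normsq_ge0 ?lecR.
Qed.

Lemma normsq_split f M N x : (M <= N)%N ->
  normsq f N x = normsq f M x + \sum_(M <= i < N) normc (f i x) ^+ 2.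
Proof. exact: sum_ord_split. Qed.

Lemma normsq_mono f M N x : (M <= N)%N -> normsq f M x <= normsq f N x.
Proof.
move=> MN; rewrite (normsq_split f _ _ x MN) lerDl.
by apply: sumr_ge0 => i _; rewrite exprn_ge0 ?normc_ge0.
Qed.

Lemma normsq_mask_le P f N x : normsq (vmask P f) N x <= normsq f N x.
Proof.
apply: ler_sum => i _; rewrite /vmask; case: (P i) => //.
by rewrite Normc.normc0 expr0n exprn_ge0 ?normc_ge0.
Qed.

Lemma normsq_vhead_le f M N x : normsq (vhead M f) N x <= normsq f M x.
Proof.
have [NM|MN] := leqP N M.
  exact: le_trans (normsq_mask_le _ _ _ _) (normsq_mono _ _ _ x NM).
rewrite (normsq_split _ _ _ x (ltnW MN)) big_nat_cond big1 ?addr0.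
  exact: normsq_mask_le.
move=> i /andP[/andP[Mi _] _]; rewrite /vmask ltnNge Mi.
by rewrite Normc.normc0 expr0n.
Qed.

Lemma normsq_vtail f M N x : (M <= N)%N ->
  normsq (vtail M f) N x = normsq f N x - normsq f M x.
Proof.
move=> MN; rewrite (normsq_split _ _ _ x MN) (normsq_split f _ _ x MN) addrAC subrr add0r.
have -> : normsq (vtail M f) M x = 0.
  by rewrite /normsq big1 // => i _; rewrite /vmask leqNgt ltn_ord Normc.normc0 expr0n.
by rewrite add0r; apply: eq_big_nat => i /andP[Mi _]; rewrite /vmask Mi.
Qed.

End partial_sums.

Section dual_space.
Context {R : realType} {X : topologicalType}.
Local Notation normc := (@Normc.normc R).
Implicit Types (f : nat -> X -> R[i]).

Lemma in_dual_mask P f : in_dual f -> in_dual (vmask P f).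
Proof.
move=> [fc [M fM]]; split.
  by move=> i; rewrite /vmask; case: (P i); [exact: fc | exact: cst_continuous].
exists M; apply/normsq_leE => N x; apply: le_trans (normsq_mask_le _ _ _ _) _.
by move/normsq_leE: fM; apply.
Qed.

Lemma normsq_hat_e i N (x : X) : normsq (@hat_e R X i) N x = (i < N)%N%:R.
Proof.
elim: N => [|N IH]; first by rewrite /normsq big_ord0.
rewrite /normsq big_ord_recr /= -/(normsq _ _ _) IH /hat_e.
rewrite [in RHS]ltnS [in RHS]leq_eqVlt [in RHS]eq_sym.
case: eqP => [->|_] /=; rewrite /Normc.normc /= ?ltnn expr0n /= ?expr1n addr0.
  by rewrite sqrtr1 expr1n add0r.
by rewrite sqrtr0 expr0n addr0.
Qed.

Lemma in_dual_hat_e i : in_dual (@hat_e R X i).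
Proof.
split; first by move=> j; exact: cst_continuous.
by exists 1; apply/normsq_leE => N x; rewrite normsq_hat_e; case: (i < N)%N.
Qed.

Lemma continuous_normsq f N : (forall i, continuous (f i)) -> continuous (normsq f N).
Proof.
move=> fc; apply: (@continuous_big _ _ +%R 0 xpredT add_continuous) => i _ x.
apply: (@continuous_comp _ _ _ (f i) (fun z => normc z ^+ 2)); first exact: fc.
apply: (@continuous_comp _ _ _ normc (fun r : R => r ^+ 2)); first exact: continuous_normc.
exact: exprn_continuous.
Qed.

End dual_space.

Lemma bump_function (R : realType) {X : topologicalType} (x : X) (V : set X) :
  compact [set: X] -> hausdorff_space X -> nbhs x V ->
  exists b : X -> R, [/\ continuous b, b x = 1,
    forall y, 0 <= b y <= 1 & forall y, ~ V y -> b y = 0].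
Proof.
move=> Xcompact Xhaus; rewrite nbhsE => -[W [oW Wx] WV].
have sep := @normal_completely_regular R X (compact_normal Xhaus Xcompact)
  (hausdorff_accessible Xhaus) x (~` W) (open_closedC oW) (fun nWx => nWx Wx).
set u := @Urysohn X R [set x] (~` W).
have ux : u x = 0 by apply: (Urysohn_sub0 sep); exists x.
have u01 y : 0 <= u y <= 1.
  by have : [set` `[0, 1]] (u y) by apply: Urysohn_range; exists y.
exists (fun y => 1 - u y); split.
- by move=> y; apply: cvgB; [exact: cvg_cst | exact: Urysohn_continuous].
- by rewrite ux subr0.
- by move=> y; have /andP[u0 u1] := u01 y; rewrite subr_ge0 u1 lerBlDr lerDl u0.
- move=> y nVy; have -> : u y = 1 by apply: (Urysohn_sub1 sep); exists y => // /WV.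
  exact: subrr.
Qed.

Section bidual.
Context {R : realType} {X : topologicalType}.
Hypotheses (Xcompact : compact [set: X]) (Xhaus : hausdorff_space X).
Local Notation normc := (@Normc.normc R).
Local Notation ehat i := (@hat_e R X i).
Variable F : (nat -> X -> R[i]) -> X -> R[i].
Hypothesis hF : in_bidual F.
Variable K : R.
Hypothesis F_bounded : forall f M, in_dual f -> 0 <= M ->
  (forall N x, normsq f N x <= M) -> forall x, normc (F f x) ^+ 2 <= K ^+ 2 * M.
Implicit Types (f h : nat -> X -> R[i]) (x y : X).

Lemma F_continuous f : in_dual f -> continuous (F f).
Proof. by case: hF => Fc _ _ _ /Fc. Qed.

Lemma F_add f g x : in_dual f -> in_dual g -> F (Defs.dadd f g) x = F f x + F g x.
Proof. by case: hF => _ Fadd _ _ fd gd; rewrite (Fadd _ _ fd gd). Qed.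

Lemma F_scale f a x : in_dual f -> continuous a -> F (Defs.dscale f a) x = F f x * a x.
Proof. by case: hF => _ _ Fscale _ fd ac; rewrite (Fscale _ _ fd ac). Qed.

Lemma F_vhead f N x : in_dual f ->
  F (vhead N f) x = \sum_(i < N) F (ehat i) x * f i x.
Proof.
move=> fd; elim: N => [|N IH]; [rewrite big_ord0 | rewrite big_ord_recr /=].
  have -> : vhead 0 f = Defs.dscale (ehat 0) (fun=> 0).
    by apply/funext => i; apply/funext => y; rewrite /vmask /Defs.dscale mulr0.
  rewrite F_scale ?mulr0 //; [exact: in_dual_hat_e | exact: cst_continuous].
have -> : vhead N.+1 f = Defs.dadd (vhead N f) (Defs.dscale (ehat N) (f N)).
  apply/funext => i; apply/funext => y.
  rewrite /vmask /Defs.dadd /Defs.dscale /hat_e ltnS leq_eqVlt.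
  by case: eqP => [->|_] /=; rewrite ?ltnn ?mul1r ?add0r ?mul0r ?addr0.
have eN : Defs.dscale (ehat N) (f N) = vmask (pred1 N) f.
  apply/funext => i; apply/funext => y; rewrite /vmask /Defs.dscale /hat_e /=.
  by case: eqP => [->|_]; rewrite ?mul1r ?mul0r.
have dN : in_dual (Defs.dscale (ehat N) (f N)) by rewrite eN; exact: in_dual_mask.
rewrite F_add //; last exact: in_dual_mask.
by rewrite IH F_scale //; [exact: in_dual_hat_e | exact: fd.1].
Qed.

Lemma F_vsplit f N x : in_dual f ->
  F f x = \sum_(i < N) F (ehat i) x * f i x + F (vtail N f) x.
Proof.
move=> fd; rewrite -F_vhead // -F_add; [congr F | exact: in_dual_mask..].
apply/funext => i; apply/funext => y; rewrite /vmask /Defs.dadd.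
by case: ltnP; rewrite ?addr0 ?add0r.
Qed.

(* A bump [a] at [x] supported in [V] makes [h a] of squared norm at most [eta]
   everywhere, while [a x = 1]; by [A]-linearity [F (h a) x = F h x] if [h] is in [H'_A]. *)
Lemma bidual_localize h x V eta : (forall i, continuous (h i)) -> nbhs x V ->
  0 <= eta -> (forall y, V y -> forall N, normsq h N y <= eta) ->
  exists a : X -> R[i], [/\ continuous a, a x = 1, in_dual (Defs.dscale h a) &
    normc (F (Defs.dscale h a) x) ^+ 2 <= K ^+ 2 * eta].
Proof.
move=> hc Vx eta0 hV.
have [b [bc bx b01 bV]] := bump_function R _ _ Xcompact Xhaus Vx.
pose a y := (b y)%:C.
have ac : continuous a.
  by move=> y; apply: (continuous_comp (bc y)); exact: continuous_real_complex.
have normsq_ha N y : normsq (Defs.dscale h a) N y <= eta.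
  have /andP[b0 b1] := b01 y.
  have -> : normsq (Defs.dscale h a) N y = b y ^+ 2 * normsq h N y.
    rewrite /normsq mulr_sumr; apply: eq_bigr => i _.
    by rewrite /Defs.dscale Normc.normcM normc_real ger0_norm // exprMn mulrC.
  have [Vy|nVy] := pselect (V y); last by rewrite bV // expr0n mul0r.
  rewrite -[leRHS]mul1r ler_pM ?exprn_ge0 ?normsq_ge0 ?expr_le1 //; exact: hV.
have had : in_dual (Defs.dscale h a).
  split; last by exists eta; exact/normsq_leE.
  by move=> i y; apply: cvgM; [exact: hc | exact: ac].
exists a; split => //; first by rewrite /a bx.
exact: F_bounded _ _ had eta0 normsq_ha x.
Qed.

Lemma F_local_bound h x V eta : in_dual h -> nbhs x V -> 0 <= eta ->
  (forall y, V y -> forall N, normsq h N y <= eta) ->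
  normc (F h x) ^+ 2 <= K ^+ 2 * eta.
Proof.
move=> hd Vx eta0 hV; have [a [ac ax _]] := bidual_localize _ _ _ _ hd.1 Vx eta0 hV.
by rewrite F_scale // ax mulr1.
Qed.

Lemma continuous_repr_seq i : continuous (repr_seq F i).
Proof.
move=> y; apply: (@continuous_comp _ _ _ (F (ehat i)) (@conjc R)).
  exact: F_continuous _ (in_dual_hat_e i) y.
exact: continuous_conjc.
Qed.

Lemma repr_seqJ i x : Num.conj (repr_seq F i x) = F (ehat i) x.
Proof. exact: conjcK. Qed.

(* Localising the first [N] terms of [(F_i)] near [x] gives a functional whose image
   under [F] at [x] is [S := normsq (repr_seq F) N x], whence [S^2 <= K^2 (S + 1)]. *)
Lemma normsq_repr_le N x : normsq (repr_seq F) N x <= K ^+ 2 + 1.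
Proof.
set s := normsq (repr_seq F) N x; have s0 : 0 <= s := normsq_ge0 _ _ _.
pose h := vhead N (repr_seq F).
have hc i : continuous (h i).
  rewrite /h /vmask; case: (i < N)%N; first exact: continuous_repr_seq.
  exact: cst_continuous.
have Vx : \forall y \near x, normsq (repr_seq F) N y < s + 1.
  by apply: cvgr_lt; [exact: continuous_normsq _ N continuous_repr_seq x | rewrite ltrDl].
have [a [_ ax had]] := bidual_localize _ _ _ _ hc Vx (addr_ge0 s0 ler01)
  (fun y Vy N' => le_trans (normsq_vhead_le _ _ _ _) (ltW Vy)).
have -> : Defs.dscale h a = vhead N (Defs.dscale h a).
  apply/funext => i; apply/funext => y; rewrite /vmask /Defs.dscale /h /vmask.
  by case: ifP; rewrite ?mul0r.
rewrite F_vhead -?[vhead N _]/(Defs.dscale h a) //.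
have -> : \sum_(i < N) F (ehat i) x * Defs.dscale h a i x = s%:C.
  rewrite /s -sqsumE; apply: eq_bigr => i _.
  by rewrite /Defs.dscale /h /vmask ltn_ord ax mulr1 -repr_seqJ.
rewrite normc_real ger0_norm // => Ks; nra.
Qed.

Definition phi x : R := sup (range (fun N => normsq (repr_seq F) N x)).

Lemma normsq_repr_ubound x : has_ubound (range (fun N => normsq (repr_seq F) N x)).
Proof. by exists (K ^+ 2 + 1) => _ [N _ <-]; exact: normsq_repr_le. Qed.

Lemma normsq_repr_le_phi N x : normsq (repr_seq F) N x <= phi x.
Proof. by apply: ub_le_sup; [exact: normsq_repr_ubound | exists N]. Qed.

Lemma cvg_normsq_repr x : normsq (repr_seq F) ^~ x @ \oo --> phi x.
Proof.
apply: nondecreasing_cvgn; last exact: normsq_repr_ubound.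
by move=> m n; exact: normsq_mono.
Qed.

Lemma PhiE : Phi F = fun x => (phi x)%:C.
Proof.
apply/funext => x; apply: cvg_lim => //.
have -> : sqsum (repr_seq F) ^~ x = real_complex R \o normsq (repr_seq F) ^~ x.
  by apply/funext => N; rewrite /= sqsumE.
apply: cvg_comp; [exact: cvg_normsq_repr | exact: continuous_real_complex].
Qed.

Lemma repr_tail_small_near x0 d : {for x0, continuous (Phi F)} -> 0 < d ->
  exists M, \forall y \near x0, forall N, (M <= N)%N ->
    \sum_(M <= i < N) normc (F (ehat i) y) ^+ 2 <= d.
Proof.
move=> Phic d0; have d30 : 0 < d / 3 by rewrite divr_gt0.
have /cvgrPdist_lt/(_ _ d30) phi_near : {for x0, continuous phi}.
  by move: Phic; rewrite PhiE; exact: cvg_real_complex.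
move/cvgrPdist_lt: (cvg_normsq_repr x0) => /(_ _ d30) [M _ /(_ M (leqnn M)) /= phiM].
have /cvgrPdist_lt/(_ _ d30) normsqM_near :=
  continuous_normsq _ M continuous_repr_seq x0.
exists M; near=> y => N MN.
have -> : \sum_(M <= i < N) normc (F (ehat i) y) ^+ 2 =
    normsq (repr_seq F) N y - normsq (repr_seq F) M y.
  rewrite (normsq_split _ _ _ y MN) addrAC subrr add0r.
  by apply: eq_bigr => i _; rewrite -repr_seqJ normc_conj.
have := normsq_repr_le_phi N y.
have /ltr_normlP[] : `|phi x0 - phi y| < d / 3 by near: y.
have /ltr_normlP[] : `|normsq (repr_seq F) M x0 - normsq (repr_seq F) M y| < d / 3.
  by near: y.
move: phiM => /ltr_normlP[]; lra.
Unshelve. all: by end_near. Qed.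

(* [y] almost maximises the partial sums of [f] over [W], so near [y] the tail of [f]
   beyond [N] has small squared norm, and [F_local_bound] applies. *)
Lemma bidual_tail_small f x W M e : in_dual f -> open_nbhs x W -> 0 < e ->
  exists y N, [/\ W y, (M <= N)%N & normc (F (vtail N f) y) <= e].
Proof.
move=> fd [oW Wx] e0; have [fc [B /normsq_leE fB]] := fd.
pose eta := e ^+ 2 / (K ^+ 2 + 1).
have K1 : 0 < K ^+ 2 + 1 by rewrite ltr_wpDl ?sqr_ge0.
have eta0 : 0 < eta by rewrite divr_gt0 ?exprn_gt0.
pose E := [set r | exists N y, W y /\ r = normsq f N y].
have Esup : has_sup E.
  by split; [exists (normsq f 0 x), 0%N, x | exists B => _ [N [y [_ ->]]]].
have [_ [N1 [y [Wy ->]]] ltN1] := sup_adherent eta0 Esup.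
pose N := maxn N1 M.
have ltN : sup E - eta < normsq f N y.
  exact: lt_le_trans ltN1 (normsq_mono _ _ _ _ (leq_maxl _ _)).
exists y, N; split => //; first exact: leq_maxr.
rewrite -(ler_pXn2r (_ : 0 < 2)%N) ?nnegrE ?normc_ge0 ?(ltW e0) //.
have Keta : K ^+ 2 * eta <= e ^+ 2.
  by rewrite mulrA ler_pdivrMr // mulrDr mulr1 mulrC lerDl sqr_ge0.
apply: le_trans Keta; apply: (F_local_bound _ _
  (W `&` [set z | sup E - eta < normsq f N z]) _ (in_dual_mask _ _ fd) _ (ltW eta0)).
  apply: filterI; first exact: open_nbhs_nbhs.
  exact: cvgr_gt (continuous_normsq _ N fc y) _ ltN.
move=> z [Wz /= ltz] N'.
apply: le_trans (normsq_mono _ _ _ z (leq_maxl N' N)) _.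
rewrite normsq_vtail ?leq_maxr //.
have : normsq f (maxn N' N) z <= sup E.
  by apply: (sup_upper_bound Esup); exists (maxn N' N), z.
lra.
Qed.

Lemma continuous_F_head f M : in_dual f ->
  continuous (fun y => \sum_(i < M) F (ehat i) y * f i y).
Proof.
move=> [fc _]; apply: (@continuous_big _ _ +%R 0 xpredT add_continuous) => i _ y.
exact: cvgM (F_continuous _ (in_dual_hat_e i) y) (fc i y).
Qed.

Lemma F_block_small f B y M N e : (forall N x, normsq f N x <= B) -> 0 <= B ->
  0 < e -> (M <= N)%N ->
  \sum_(M <= i < N) normc (F (ehat i) y) ^+ 2 <= e ^+ 2 / (B + 1) ->
  normc (\sum_(M <= i < N) F (ehat i) y * f i y) <= e.
Proof.
move=> fB B0 e0 MN Fsmall; apply: normc_sum_mul_small e0 B0 Fsmall _.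
by apply: le_trans (fB N y); rewrite (normsq_split _ _ _ y MN) lerDr normsq_ge0.
Qed.

Lemma bidual_series_est x0 f e : {for x0, continuous (Phi F)} -> in_dual f -> 0 < e ->
  exists M, forall N, (M <= N)%N ->
    normc (F f x0 - \sum_(i < N) F (ehat i) x0 * f i x0) <= e.
Proof.
move=> Phic fd e0; have [_ [B /normsq_leE fB]] := fd.
have B0 : 0 <= B := le_trans (normsq_ge0 f 0 x0) (fB 0%N x0).
pose e5 := e / 5; have e50 : 0 < e5 by rewrite divr_gt0.
have [M Mnear] := repr_tail_small_near x0 (e5 ^+ 2 / (B + 1)) Phic
  (divr_gt0 (exprn_gt0 2 e50) (ltr_wpDl B0 ltr01)).
pose H y := \sum_(i < M) F (ehat i) y * f i y.
have : \forall y \near x0, [/\ forall N, (M <= N)%N ->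
    \sum_(M <= i < N) normc (F (ehat i) y) ^+ 2 <= e5 ^+ 2 / (B + 1),
    normc (F f x0 - F f y) < e5 & normc (H x0 - H y) < e5].
  near=> y; split; near: y; first exact: Mnear.
    exact: cvg_normc_lt (F_continuous _ fd x0) e50.
  exact: cvg_normc_lt (continuous_F_head f M fd x0) e50.
rewrite /prop_near1 nbhsE => -[W Wx0 WP].
have mid_small y N : W y -> (M <= N)%N ->
    normc (\sum_(M <= i < N) F (ehat i) y * f i y) <= e5.
  move=> Wy MN; have [Fsmall _ _] := WP y Wy.
  exact: F_block_small fB B0 e50 MN (Fsmall N MN).
have [y [N0 [Wy MN0 tail_small]]] := bidual_tail_small f x0 W M e5 fd Wx0 e50.
have [_ Fxy Hxy] := WP y Wy.
have Fy : F f y = H y + \sum_(M <= i < N0) F (ehat i) y * f i y + F (vtail N0 f) y.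
  by rewrite (F_vsplit f N0 y fd) (sum_ord_split _ (fun i => F (ehat i) y * f i y) _ _ MN0).
exists M => N MN.
rewrite (sum_ord_split _ (fun i => F (ehat i) x0 * f i x0) _ _ MN) -/(H x0).
have -> : F f x0 - (H x0 + \sum_(M <= i < N) F (ehat i) x0 * f i x0) =
    F f x0 - F f y + (H y - H x0) + \sum_(M <= i < N0) F (ehat i) y * f i y +
    F (vtail N0 f) y - \sum_(M <= i < N) F (ehat i) x0 * f i x0.
  by rewrite Fy; ring.
have -> : e = e5 + e5 + e5 + e5 + e5 by rewrite /e5; field.
apply: le_trans (le_normcD _ _) _; apply: lerD; last first.
  by rewrite normcN; apply: mid_small; first exact: Wx0.2.
apply: le_trans (le_normcD _ _) _; apply: lerD; last exact: tail_small.
apply: le_trans (le_normcD _ _) _; apply: lerD; last exact: mid_small.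
apply: le_trans (le_normcD _ _) _; apply: lerD; apply: ltW => //.
by rewrite -normcN opprB.
Unshelve. all: by end_near. Qed.

End bidual.

Lemma in_bidual_bound {R : realType} {X : topologicalType}
    (F : (nat -> X -> R[i]) -> X -> R[i]) :
  in_bidual F -> exists K : R, forall f M, in_dual f -> 0 <= M ->
    (forall N x, normsq f N x <= M) -> forall x, Normc.normc (F f x) ^+ 2 <= K ^+ 2 * M.
Proof.
case=> _ _ _ [K [_ FK]]; exists K => f M fd M0 fM x.
have := FK f M fd M0 (proj2 (normsq_leE f M) fM) x.
by rewrite -[`|_|]/((Normc.normc _)%:C) -rmorphXn lecR.
Qed.

Theorem lemma3p1 (R : realType) (X : topologicalType)
  (hcompact : compact [set: X]) (hhaus : hausdorff_space X)
  (F : (nat -> X -> R[i]) -> X -> R[i]) (hF : in_bidual F)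
  (x0 : X) (hx0 : {for x0, continuous (Phi F)})
  (f : nat -> X -> R[i]) (hf : in_dual f) :
  (fun N => \sum_(i < N) ((repr_seq F i x0)^* * f i x0)) @ \oo --> F f x0.
Proof.
have [K FK] := in_bidual_bound F hF.
apply: cvg_normc_le => e e0.
have [M Mest] := bidual_series_est hcompact hhaus _ hF _ FK _ _ _ hx0 hf e0.
exists M => // N MN /=.
under eq_bigr => i _ do rewrite repr_seqJ.
exact: Mest.
Qed.
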